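(* Let $n$, $U=U_{n+1}$, the bases $E_{\mathcal M}$, $F^{\mathcal M}$, the elements $E_{\mathcal M_1\cdots\mathcal M_k}$, $F^{\mathcal N_1\cdots\mathcal N_k}$ and the projectors $\mathbb{P}_k$ be as in the context, and let $p\ge2$ be an integer. Suppose there are real numbers $a_k$ ($k=2,3,\dots,p$) such that $$\langle E_{\mathcal M_1\cdots\mathcal M_k}|F^{\mathcal N_1\cdots\mathcal N_k}\rangle=a_k(\mathbb{P}_k)_{\mathcal M_1\cdots\mathcal M_k}{}^{\mathcal N_1\cdots\mathcal N_k}$$ for all indices and all $k=2,\dots,p$, and put $a_1=1$. Then, for all indices (with summation over repeated indices), (i) $[\![E_{\mathcal M},F^{\mathcal N_1\cdots\mathcal N_p}]\!]=(-1)^p\frac{a_p}{a_{p-1}}(\mathbb{P}_p)_{\mathcal M\mathcal M_2\cdots\mathcal M_p}{}^{\mathcal N_1\cdots\mathcal N_p}F^{\mathcal M_2\cdots\mathcal M_p}$; (ii) $[\![E_{\mathcal M_2\cdots\mathcal M_p},F^{\mathcal N_1\cdots\mathcal N_p}]\!]=a_p(\mathbb{P}_p)_{\mathcal M_1\mathcal M_2\cdots\mathcal M_p}{}^{\mathcal N_1\cdots\mathcal N_p}F^{\mathcal M_1}$; (iii) $[\![E_{\mathcal M_1\cdots\mathcal M_p},F^{\mathcal N_1\cdots\mathcal N_p}]\!]=a_p(\mathbb{P}_p)_{\mathcal M_1\cdots\mathcal M_p}{}^{\mathcal K_1\cdots\mathcal K_p}\sum_{i=1}^p\delta_{\mathcal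 K_1}{}^{\mathcal N_1}\cdots\delta_{\mathcal K_{i-1}}{}^{\mathcal N_{i-1}}\{E_{\mathcal K_i},F^{\mathcal N_i}\}\delta_{\mathcal K_{i+1}}{}^{\mathcal N_{i+1}}\cdots\delta_{\mathcal K_p}{}^{\mathcal N_p}$. (For $p=2$, $F^{\mathcal M_2\cdots\mathcal M_p}$ means $F^{\mathcal M_2}$ and $E_{\mathcal M_2\cdots\mathcal M_p}$ means $E_{\mathcal M_2}$.)
   Context: Fix an integer $n$ with $4\le n\le 8$. $E_n$ denotes the split real Lie algebra with Dynkin diagram on nodes $1,\dots,n$, where nodes $1,\dots,n-1$ form a chain and node $n$ is joined to node $n-3$. Extend this diagram by a node $0$ joined to node $1$, and let $A=(A_{IJ})_{I,J=0,\dots,n}$ with $A_{00}=0$, $A_{ii}=2$ for $i\ge1$, $A_{IJ}=-1$ if $I\neq J$ are joined and $0$ otherwise. Let $\tilde U$ be the real Lie superalgebra generated by $e_I,f_I,h_I$ ($I=0,\dots,n$), all even except $e_0,f_0$ which are odd, subject to $[\![h_I,e_J]\!]=A_{IJ}e_J$, $[\![h_I,f_J]\!]=-A_{IJ}f_J$, $[\![e_I,f_J]\!]=\delta_{IJ}h_J$, $[\![h_I,h_J]\!]=0$, where $[\![x,y]\!]$ is the superbracket (written $\{x,y\}$ when both are odd, where it is symmetric, and $[x,y]$ otherwise). $U=U_{n+1}$ is the quotient of $\tilde U$ by its maximal ideal intersecting $\mathrm{span}\{h_I\}$ trivially (equivalently by the ideal generated by $(\mathrm{ad}\,e_i)^{1-A_{iJ}}(e_J)$,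 $(\mathrm{ad}\,f_i)^{1-A_{iJ}}(f_J)$, $i=1,\dots,n$, $J=0,\dots,n$). $U=\bigoplus_p U_p$ is $\mathbb{Z}$-graded with $e_0\in U_{-1}$, $f_0\in U_1$, all other generators in $U_0$; $U_p$ has parity $p\bmod 2$ and $[\![U_p,U_q]\!]\subseteq U_{p+q}$. The subalgebra generated by $e_i,f_i,h_i$ ($i\ge1$) is $E_n$, and each $U_p$ is an $E_n$-module. $U$ carries an invariant, supersymmetric bilinear form $\langle\cdot|\cdot\rangle$ with $\langle U_p|U_q\rangle=0$ unless $p+q=0$, $\langle h_I|h_J\rangle=A_{IJ}$, $\langle e_I|f_J\rangle=\delta_{IJ}$, $\langle e_I|e_J\rangle=\langle f_I|f_J\rangle=0$. Choose bases $\{E_{\mathcal M}\}$ of $U_{-1}$ and $\{F^{\mathcal M}\}$ of $U_1$ with $\langle E_{\mathcal M}|F^{\mathcal N}\rangle=\delta_{\mathcal M}{}^{\mathcal N}$. For $k\ge2$ set $E_{\mathcal M_1\cdots\mathcal M_k}=[\![E_{\mathcal M_1},[\![E_{\mathcal M_2},\ldots,[\![E_{\mathcal M_{k-1}},E_{\mathcal M_k}]\!]\cdots]\!]]\!]$ and $F^{\mathcal M_1\cdots\mathcal M_k}=[\![F^{\mathcal M_1},[\![F^{\mathcal M_2},\ldots,[\![F^{\mathcal M_{k-1}},F^{\mathcal M_k}]\!]\cdots]\!]]\!]$; these span $U_{-k}$ and $U_k$ respectively. For $k\ge2$, $\mathbb{P}_k$ is the projector onto the $E_n$-representation $U_{-k}$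 inside the $k$-fold tensor power of $U_{-1}$: an array $(\mathbb{P}_k)_{\mathcal M_1\cdots\mathcal M_k}{}^{\mathcal N_1\cdots\mathcal N_k}$, idempotent as a matrix, such that $E_{\mathcal M_1\cdots\mathcal M_k}=(\mathbb{P}_k)_{\mathcal M_1\cdots\mathcal M_k}{}^{\mathcal N_1\cdots\mathcal N_k}E_{\mathcal N_1\cdots\mathcal N_k}$ and $F^{\mathcal N_1\cdots\mathcal N_k}=(\mathbb{P}_k)_{\mathcal M_1\cdots\mathcal M_k}{}^{\mathcal N_1\cdots\mathcal N_k}F^{\mathcal M_1\cdots\mathcal M_k}$. Repeated indices are summed. *)

(* Abstract axiomatic description of the Lie superalgebra
   U = U_{n+1} of the paper, characterised up to isomorphism by its
   presentation (generators + relations + maximality of the quotient). *)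
From HB Require Import structures.
From mathcomp Require Import all_boot all_order all_algebra.
From mathcomp Require Import reals.
Set Implicit Arguments. Unset Strict Implicit. Unset Printing Implicit Defensive.
Import Order.TTheory GRing.Theory Num.Theory.
Local Open Scope ring_scope.

(* ---------- The matrix A (extended E_n Dynkin diagram, nodes 0..n) ------- *)
Definition dyn_edge (n a b : nat) : bool :=
  [|| (a == 0%N) && (b == 1%N),
      (1 <= a)%N && (b == a.+1) && (b <= n.-1)%N
    | (a == n - 3)%N && (b == n)].

Definition joined (n a b : nat) : bool :=
  (a != b) && (dyn_edge n a b || dyn_edge n b a).

Definition cartanA (R : nzRingType) (n : nat) (I J : 'I_n.+1) : R :=
  if I == J then (if val I == 0%N then 0 else 2)
  else if joined n I J then -1 else 0.

Section Super.
Variables (R : nzRingType) (V : lmodType R).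

Definition is_subspace (S : V -> Prop) : Prop :=
  S 0 /\ forall (a : R) x y, S x -> S y -> S (a *: x + y).

Definition sgn (p q : int) : R := (-1) ^+ (odd `|p|%N && odd `|q|%N).

Definition graded_space (G : int -> V -> Prop) : Prop :=
  [/\ forall p, is_subspace (G p),
      forall v, exists (s : seq int) (c : int -> V),
          (forall p, G p (c p)) /\ v = \sum_(p <- s) c p
    & forall (s : seq int) (c : int -> V), uniq s -> (forall p, G p (c p)) ->
          \sum_(p <- s) c p = 0 -> forall p, p \in s -> c p = 0].

Definition bilinear_br (br : V -> V -> V) : Prop :=
  (forall (a : R) x y z, br (a *: x + y) z = a *: br x z + br y z) /\
  (forall (a : R) x y z, br z (a *: x + y) = a *: br z x + br z y).

(* Z-graded Lie superalgebra whose Z_2-grading is the degree mod 2;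
   br is the superbracket [[_,_]] *)
Definition graded_lie_superalgebra (G : int -> V -> Prop) (br : V -> V -> V)
  : Prop :=
  [/\ graded_space G, bilinear_br br,
      forall p q x y, G p x -> G q y -> G (p + q) (br x y),
      forall p q x y, G p x -> G q y -> br x y = - (sgn p q *: br y x)
    & forall p q x y z, G p x -> G q y ->
        br x (br y z) = br (br x y) z + sgn p q *: br y (br x z)].

Definition is_ideal (br : V -> V -> V) (I : V -> Prop) : Prop :=
  is_subspace I /\ forall x y, I y -> I (br x y).

Definition invariant_form (G : int -> V -> Prop) (br : V -> V -> V)
  (form : V -> V -> R) : Prop :=
  [/\ (forall (a : R) x y z, form (a *: x + y) z = a * form x z + form y z),
      (forall (a : R) x y z, form z (a *: x + y) = a * form z x + form z y),
      (forall x y z, form (br x y) z = form x (br y z)),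
      (forall p q x y, G p x -> G q y -> form x y = sgn p q * form y x)
    & (forall p q x y, G p x -> G q y -> p + q != 0 -> form x y = 0)].

Fixpoint itbr (d : nat) (br : V -> V -> V) (X : 'I_d -> V) (s : seq 'I_d) : V :=
  match s with
  | [::] => 0
  | [:: m] => X m
  | m :: s' => br (X m) (itbr br X s')
  end.
End Super.

(* The conditions
   below characterise (V, br) up to isomorphism as the quotient of the
   free superalgebra tilde U by its maximal ideal meeting span{h_I} trivially. *)
Definition is_U (R : nzRingType) (V : lmodType R) (n : nat)
  (G : int -> V -> Prop) (br : V -> V -> V) (e f h : 'I_n.+1 -> V) : Prop :=
  [/\ graded_lie_superalgebra G br,
      [/\ G (-1) (e ord0), G 1 (f ord0),
          forall i : 'I_n.+1, val i != 0%N -> G 0 (e i) /\ G 0 (f i)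
        & forall I, G 0 (h I)],
      [/\ forall I J, br (h I) (e J) = cartanA R I J *: e J,
          forall I J, br (h I) (f J) = - (cartanA R I J *: f J),
          forall I J, br (e I) (f J) = (I == J)%:R *: h J
        & forall I J, br (h I) (h J) = 0],
      ((forall S : V -> Prop, is_subspace S ->
         (forall I, [/\ S (e I), S (f I) & S (h I)]) ->
         (forall x y, S x -> S y -> S (br x y)) -> forall v, S v) /\
      (forall c : 'I_n.+1 -> R, \sum_I c I *: h I = 0 -> forall I, c I = 0))
    & (* quotient by the maximal ideal meeting span{h_I} trivially:
         no nonzero ideal meets span{h_I} trivially *)
      (forall Id : V -> Prop, is_ideal br Id ->
         (forall v, Id v -> (exists c : 'I_n.+1 -> R, v = \sum_I c I *: h I) ->
                    v = 0) ->
         forall v, Id v -> v = 0)].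

Definition is_U_form (R : nzRingType) (V : lmodType R) (n : nat)
  (G : int -> V -> Prop) (br : V -> V -> V) (e f h : 'I_n.+1 -> V)
  (form : V -> V -> R) : Prop :=
  [/\ invariant_form G br form,
      forall I J, form (h I) (h J) = cartanA R I J,
      forall I J, form (e I) (f J) = (I == J)%:R,
      forall I J, form (e I) (e J) = 0
    & forall I J, form (f I) (f J) = 0].

Definition is_basis_of (R : nzRingType) (V : lmodType R) (d : nat)
  (S : V -> Prop) (X : 'I_d -> V) : Prop :=
  [/\ forall M, S (X M),
      forall v, S v -> exists c : 'I_d -> R, v = \sum_M c M *: X M
    & forall c : 'I_d -> R, \sum_M c M *: X M = 0 -> forall M, c M = 0].

Definition is_projector (R : nzRingType) (V : lmodType R) (d k : nat)
  (br : V -> V -> V) (E F : 'I_d -> V)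
  (P : k.-tuple 'I_d -> k.-tuple 'I_d -> R) : Prop :=
  [/\ forall M N : k.-tuple 'I_d,
        \sum_(L : k.-tuple 'I_d) P M L * P L N = P M N,
      forall M : k.-tuple 'I_d,
        itbr br E M = \sum_(N : k.-tuple 'I_d) P M N *: itbr br E N
    & forall N : k.-tuple 'I_d,
        itbr br F N = \sum_(M : k.-tuple 'I_d) P M N *: itbr br F M].

From HB Require Import structures.
From mathcomp Require Import all_boot all_order all_algebra.
From mathcomp Require Import reals.
From mathcomp Require Import lra zify ring.
Import Order.TTheory GRing.Theory Num.Theory.
Local Open Scope ring_scope.
Set Implicit Arguments. Unset Strict Implicit. Unset Printing Implicit Defensive.

(* The invariant form pairs U_{-k} and U_k nondegenerately.  Its radical is an
   ideal, and it meets span{h_I} trivially because the extended Cartan matrix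
   A is nonsingular for 4 <= n <= 8, so it vanishes by maximality of U.  Since
   U is generated by the e_I, f_I, h_I, every element of U_{-k} is a sum of
   k-fold brackets of elements of U_{-1}, hence an element of U_k is determined
   by its pairings with the E_{M_1...M_k}.  Each identity is then checked by
   pairing both sides with a suitable test element and moving brackets across
   by invariance: E_{M_1} for (ii); E_{M_2...M_p} for (i), after expanding it
   through P_{p-1} with the normalisation a_{p-1}; and an arbitrary u in U_0 for
   (iii), where ad u acts on F^{N_1...N_p} as a derivation. *)

Section LinearMaps.
Variables (R : nzRingType) (V : lmodType R).

Definition is_lmap (W : lmodType R) (phi : V -> W) :=
  forall a y z, phi (a *: y + z) = a *: phi y + phi z.

Definition is_lform (phi : V -> R) :=
  forall a y z, phi (a *: y + z) = a * phi y + phi z.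

Section LinearMap.
Variables (W : lmodType R) (phi : V -> W) (phi_lin : is_lmap phi).

Lemma lmap0 : phi 0 = 0.
Proof.
have := phi_lin (-1) 0 0; rewrite scaler0 addr0 scaleN1r => /eqP.
by rewrite addNr => /eqP.
Qed.

Lemma lmapD y z : phi (y + z) = phi y + phi z.
Proof. by have := phi_lin 1 y z; rewrite !scale1r. Qed.

Lemma lmapZ a y : phi (a *: y) = a *: phi y.
Proof. by rewrite -[a *: y]addr0 phi_lin lmap0 addr0. Qed.

Lemma lmap_sum (I : Type) (r : seq I) (P : pred I) (g : I -> V) :
  phi (\sum_(i <- r | P i) g i) = \sum_(i <- r | P i) phi (g i).
Proof. by elim/big_rec2: _ => [|i x y _ <-]; rewrite ?lmap0 ?lmapD. Qed.
End LinearMap.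

Section LinearForm.
Variables (phi : V -> R) (phi_lin : is_lform phi).

Lemma lform0 : phi 0 = 0.
Proof.
have := phi_lin (-1) 0 0; rewrite scaler0 addr0 mulN1r => /eqP.
by rewrite addNr => /eqP.
Qed.

Lemma lformD y z : phi (y + z) = phi y + phi z.
Proof. by have := phi_lin 1 y z; rewrite scale1r mul1r. Qed.

Lemma lformZ a y : phi (a *: y) = a * phi y.
Proof. by rewrite -[a *: y]addr0 phi_lin lform0 addr0. Qed.

Lemma lformN y : phi (- y) = - phi y.
Proof. by rewrite -scaleN1r lformZ mulN1r. Qed.

Lemma lformB y z : phi (y - z) = phi y - phi z.
Proof. by rewrite lformD lformN. Qed.

Lemma lform_sum (I : Type) (r : seq I) (P : pred I) (g : I -> V) :
  phi (\sum_(i <- r | P i) g i) = \sum_(i <- r | P i) phi (g i).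
Proof. by elim/big_rec2: _ => [|i x y _ <-]; rewrite ?lform0 ?lformD. Qed.
End LinearForm.

Section Subspace.
Variables (S : V -> Prop) (S_sub : is_subspace S).

Lemma subspaceZ a x : S x -> S (a *: x).
Proof. by case: S_sub => S0 Slin Sx; rewrite -[_ *: _]addr0; apply: Slin. Qed.

Lemma subspaceD x y : S x -> S y -> S (x + y).
Proof. by case: S_sub => _ Slin Sx Sy; rewrite -[x]scale1r; apply: Slin. Qed.

Lemma subspaceB x y : S x -> S y -> S (x - y).
Proof. by move=> Sx Sy; rewrite -scaleN1r; apply/subspaceD/subspaceZ. Qed.

Lemma subspace_sum (I : Type) (r : seq I) (P : pred I) (g : I -> V) :
  (forall i, P i -> S (g i)) -> S (\sum_(i <- r | P i) g i).
Proof.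
move=> Sg; elim/big_rec: _ => [|i x Pi Sx]; first by case: S_sub.
by apply: subspaceD => //; apply: Sg.
Qed.
End Subspace.
End LinearMaps.

Definition tuple_upd (T : Type) k (N : k.-tuple T) (i : 'I_k) (L : T) :=
  [tuple (if j == i then L else tnth N j) | j < k].

Lemma map_tuple_upd (T U : Type) (f : T -> U) (x0 : U) k (N : k.-tuple T)
    (i : 'I_k) (L : T) :
  map f (tuple_upd N i L) = set_nth x0 (map f N) i (f L).
Proof.
apply: (@eq_from_nth _ x0).
  rewrite size_set_nth (size_map f (tuple_upd N i L)) size_map !size_tuple.
  by have := ltn_ord i; lia.
move=> j; rewrite (size_map f (tuple_upd N i L)) size_tuple => jk.
rewrite nth_set_nth /= !(nth_map (tnth N i)) ?size_tuple ?card_ord //.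
rewrite -[j]/(nat_of_ord (Ordinal jk)) nth_mktuple -val_eqE /=.
by case: ifP => // _; rewrite (tnth_nth (tnth N i)).
Qed.

Section FiniteSums.
Variables (R : comNzRingType) (V : lmodType R).

Lemma sum_mul_delta (T : finType) (c : T -> R) (L : T) :
  \sum_M c M * (L == M)%:R = c L.
Proof.
rewrite (bigD1 L) //= eqxx mulr1 big1 ?addr0 // => M /negbTE.
by rewrite eq_sym => ->; rewrite mulr0.
Qed.

Lemma sum_scale_delta (T : finType) (v : T -> V) (L : T) :
  \sum_M (L == M)%:R *: v M = v L.
Proof.
rewrite (bigD1 L) //= eqxx scale1r big1 ?addr0 // => M /negbTE.
by rewrite eq_sym => ->; rewrite scale0r.
Qed.

Lemma sum_uniq_indicator (T : eqType) (s : seq T) x : uniq s -> x \in s ->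
  \sum_(p <- s) ((p == x)%:R : R) = 1.
Proof.
move=> us xs; transitivity ((count_mem x s)%:R : R).
  by elim: s {us xs} => [|p s IH]; rewrite ?big_nil ?big_cons //= IH natrD.
by rewrite count_uniq_mem // xs.
Qed.

Lemma prod_natr_bool (I : finType) (P : pred I) (b : I -> bool) :
  \prod_(j | P j) ((b j)%:R : R) = ([forall j, P j ==> b j])%:R.
Proof.
case: (boolP [forall j, _]) => [/forallP Hall|].
  by rewrite big1 // => j Pj; have := Hall j; rewrite Pj => /= ->.
move/forallPn => [j]; rewrite negb_imply => /andP[Pj nbj].
by rewrite (bigD1 j) //= (negbTE nbj) mul0r.
Qed.

(* The product is the indicator that K agrees with N away from position i. *)
Lemma sum_agree_except (T : finType) k (N : k.-tuple T) (i : 'I_k)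
    (f : k.-tuple T -> R) :
  \sum_(K : k.-tuple T) (\prod_(j < k | j != i) (tnth K j == tnth N j)%:R) * f K
  = \sum_L f (tuple_upd N i L).
Proof.
transitivity (\sum_(K : k.-tuple T) \sum_L
   ((\prod_(j < k | j != i) ((tnth K j == tnth N j)%:R : R)) * f K)
     * (tnth K i == L)%:R).
  by apply: eq_bigr => K _; rewrite sum_mul_delta.
rewrite exchange_big; apply: eq_bigr => L _.
rewrite -[RHS](sum_mul_delta f); apply: eq_bigr => K _.
rewrite [_ == K]eq_sym.
rewrite prod_natr_bool mulrAC -natrM mulnb mulrC; congr (_ * (nat_of_bool _)%:R).
rewrite eqEtuple; apply/andP/forallP => [[/forallP agree /eqP KiL] j|agree].
  rewrite tnth_mktuple; case: ifP => [/eqP ->|ne]; first by rewrite KiL.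
  by have := agree j; rewrite ne.
split; last by have := agree i; rewrite tnth_mktuple eqxx.
apply/forallP => j; apply/implyP => ne; have := agree j.
by rewrite tnth_mktuple (negbTE ne).
Qed.
End FiniteSums.

(* [cartanA] over nat indices with integer entries, so that the kernel
   equations below reduce by computation. *)
Definition cartanZ (n i j : nat) : int :=
  if i == j then (if i == 0%N then 0 else 2) else if joined n i j then -1 else 0.

Lemma cartanA_int (R : nzRingType) n (I J : 'I_n.+1) :
  cartanA R I J = (cartanZ n I J)%:~R.
Proof.
rewrite /cartanA /cartanZ -(inj_eq val_inj) /=.
by case: ifP => _; [case: ifP|case: ifP] => _ //=; rewrite ?rmorphN ?rmorph1.
Qed.

Lemma cartanA_sym (R : nzRingType) n (I J : 'I_n.+1) :
  cartanA R I J = cartanA R J I.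
Proof.
rewrite /cartanA eq_sym; case: eqP => [->|_] //.
by rewrite /joined eq_sym orbC.
Qed.

(* Adds [eqs 0 isT], [eqs 1 isT], ... as premises until the bound check fails. *)
Ltac push_equations eqs j :=
  tryif have := eqs j isT then push_equations eqs constr:(S j) else idtac.

Lemma cartanA_kernel_int (R : nzRingType) n (c : 'I_n.+1 -> R) :
  (forall J, \sum_I c I * cartanA R I J = 0) ->
  forall j, (j < n.+1)%N -> \sum_(0 <= i < n.+1) c (inord i) * (cartanZ n i j)%:~R = 0.
Proof.
move=> Hc j ltjn; rewrite -[RHS](Hc (inord j)) big_mkord; apply: eq_bigr => i _.
by rewrite inord_val cartanA_int inordK.
Qed.

(* det A = n - 10; for each n the kernel equations are solved by linear
   arithmetic. *)
Lemma cartanA_nondeg (R : realFieldType) n : (4 <= n <= 8)%N ->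
  forall c : 'I_n.+1 -> R,
  (forall J, \sum_I c I * cartanA R I J = 0) -> forall I, c I = 0.
Proof.
case: n => [|[|[|[|[|[|[|[|[|n]]]]]]]]] // _ c /cartanA_kernel_int eqs I.
all: push_equations eqs 0%N; rewrite !big_nat_recl // !big_geq // /cartanZ /=.
all: rewrite ?mulr0 ?mulrN1 ?mulr1 ?add0r ?addr0 => *.
all: rewrite -(inord_val I); move: (nat_of_ord I) (ltn_ord I) => i.
all: by do ![case: i => [_|i]; first by lra].
Qed.

Section GradedSuperalgebra.
Variables (R : fieldType) (V : lmodType R) (G : int -> V -> Prop)
  (br : V -> V -> V) (form : V -> V -> R).
Hypotheses (HL : graded_lie_superalgebra G br) (Hinv : invariant_form G br form).

Lemma homog_subspace p : is_subspace (G p). Proof. by case: HL => [[]]. Qed.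
Lemma homog0 p : G p 0. Proof. by case: (homog_subspace p). Qed.
Lemma homogD p x y : G p x -> G p y -> G p (x + y).
Proof. exact: (subspaceD (homog_subspace p)). Qed.
Lemma homogZ p a x : G p x -> G p (a *: x).
Proof. exact: (subspaceZ (homog_subspace p)). Qed.
Lemma homogB p x y : G p x -> G p y -> G p (x - y).
Proof. exact: (subspaceB (homog_subspace p)). Qed.
Lemma homog_sum p (I : Type) (r : seq I) (P : pred I) (g : I -> V) :
  (forall i, P i -> G p (g i)) -> G p (\sum_(i <- r | P i) g i).
Proof. exact: (subspace_sum (homog_subspace p)). Qed.
Lemma homog_cast p p' x : p = p' -> G p x -> G p' x. Proof. by move->. Qed.

Lemma homog_br p q x y : G p x -> G q y -> G (p + q) (br x y).
Proof. by case: HL => _ _ H _ _; apply: H. Qed.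
Lemma br_supersym p q x y : G p x -> G q y -> br x y = - (sgn R p q *: br y x).
Proof. by case: HL => _ _ _ H _; apply: H. Qed.
Lemma br_jacobi p q x y z : G p x -> G q y ->
  br x (br y z) = br (br x y) z + sgn R p q *: br y (br x z).
Proof. by case: HL => _ _ _ _ H; apply: H. Qed.
Lemma br_linl z : is_lmap (br^~ z).
Proof. by case: HL => _ [H _] _ _ _ a x y; apply: H. Qed.
Lemma br_linr z : is_lmap (br z).
Proof. by case: HL => _ [_ H] _ _ _ a x y; apply: H. Qed.

Lemma form_linl z : is_lform (form^~ z).
Proof. by case: Hinv => H _ _ _ _ a x y; apply: H. Qed.
Lemma form_linr z : is_lform (form z).
Proof. by case: Hinv => _ H _ _ _ a x y; apply: H. Qed.
Lemma form_invariant x y z : form (br x y) z = form x (br y z).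
Proof. by case: Hinv => _ _ H _ _; apply: H. Qed.
Lemma form_homog0 p q x y : G p x -> G q y -> p + q != 0 -> form x y = 0.
Proof. by case: Hinv => _ _ _ _ H; apply: H. Qed.

Lemma sgn0l q : sgn R 0 q = 1. Proof. by []. Qed.
Lemma sgn0r q : sgn R q 0 = 1. Proof. by rewrite /sgn andbF. Qed.
Lemma sgnN1 k : - sgn R (- k%:Z) (-1) = (-1) ^+ k.+1.
Proof. by rewrite /sgn abszN absz_nat /= andbT signr_odd exprS mulN1r. Qed.

Fixpoint bracket_chain (s : seq V) : V :=
  match s with
  | [::] => 0
  | [:: v] => v
  | v :: s' => br v (bracket_chain s')
  end.

Lemma bracket_chain_cons v s : s != [::] ->
  bracket_chain (v :: s) = br v (bracket_chain s).
Proof. by case: s. Qed.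

Lemma itbrE d (X : 'I_d -> V) (s : seq 'I_d) :
  itbr br X s = bracket_chain (map X s).
Proof.
elim: s => [|m s IH] //; case: s IH => [|m' s] IH //.
by rewrite [LHS]/= -/(itbr br X (m' :: s)) IH.
Qed.

Lemma itbr_cons d (X : 'I_d -> V) m (s : seq 'I_d) : s != [::] ->
  itbr br X (m :: s) = br (X m) (itbr br X s).
Proof. by case: s. Qed.

Lemma bracket_chain_homog (c : int) s : s != [::] ->
  (forall v, v \in s -> G c v) -> G (c * (size s)%:Z) (bracket_chain s).
Proof.
elim: s => [|v [|w s] IH] // _ Hs.
  by rewrite /= mulr1; apply: Hs; rewrite inE.
have Gv : G c v by apply: Hs; rewrite in_cons eqxx.
have Gs : G (c * (size (w :: s))%:Z) (bracket_chain (w :: s)).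
  by apply: IH => // u Hu; apply: Hs; rewrite in_cons Hu orbT.
rewrite bracket_chain_cons //; apply: homog_cast (homog_br Gv Gs).
by rewrite /= [in RHS]intS mulrDr mulr1.
Qed.

Lemma set_nth_neq_nil (s : seq V) i y : set_nth 0 s i y != [::].
Proof. by case: s => [|x s]; case: i. Qed.

Lemma bracket_chain_set_lmap s i : (i < size s)%N ->
  is_lmap (fun y => bracket_chain (set_nth 0 s i y)).
Proof.
elim: s i => [|v s IH] [|i] // Hi c y z.
  case: s {IH Hi} => [|w s] //.
  by rewrite ![set_nth _ _ _ _]/= !(@bracket_chain_cons _ (w :: s)) //; exact: br_linl.
rewrite ![set_nth _ _ _ _]/= !bracket_chain_cons ?set_nth_neq_nil // IH //.
by rewrite (lmapD (br_linr v)) (lmapZ (br_linr v)).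
Qed.

(* Degree 0 is even, so [br u] is a derivation without signs. *)
Lemma br_bracket_chain u s : G 0 u -> (forall v, v \in s -> G 1 v) ->
  br u (bracket_chain s)
  = \sum_(0 <= i < size s) bracket_chain (set_nth 0 s i (br u (nth 0 s i))).
Proof.
move=> Gu; elim: s => [|v s IH] Hs; first by rewrite (lmap0 (br_linr u)) big_geq.
case: s IH Hs => [|w s] IH Hs; first by rewrite big_nat1.
have Gv : G 1 v by apply: Hs; rewrite in_cons eqxx.
rewrite bracket_chain_cons // (br_jacobi _ Gu Gv) sgn0l scale1r IH; last first.
  by move=> x Hx; apply: Hs; rewrite in_cons Hx orbT.
rewrite [in RHS]big_nat_recl //; congr (_ + _).
rewrite (lmap_sum (br_linr v)); apply: eq_bigr => i _.
by rewrite [set_nth _ _ _ _]/= bracket_chain_cons ?set_nth_neq_nil.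
Qed.

Inductive neg_span : nat -> V -> Prop :=
| neg_span1 v : G (-1) v -> neg_span 1 v
| neg_span_br k w z : G (-1) w -> neg_span k z -> neg_span k.+1 (br w z)
| neg_spanD k x y : neg_span k x -> neg_span k y -> neg_span k (x + y)
| neg_spanZ k a x : neg_span k x -> neg_span k (a *: x)
| neg_span0 k : neg_span k.+1 0.

Lemma neg_span_homog k x : neg_span k x -> G (- (k%:Z)) x.
Proof.
elim=> {k x} [v Hv|k w z Hw _ Hz|k x y _ Hx _ Hy|k a x _ Hx|k] //.
- by apply: (homog_cast _ (homog_br Hw Hz)); rewrite intS opprD.
- exact: homogD.
- exact: homogZ.
- exact: homog0.
Qed.

Lemma neg_span_gt0 k x : neg_span k x -> (0 < k)%N.
Proof. by elim. Qed.

Lemma neg_span_cast k k' x : k = k' -> neg_span k x -> neg_span k' x.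
Proof. by move->. Qed.

Lemma neg_span_sum k (I : Type) (r : seq I) (P : pred I) (g : I -> V) :
  (0 < k)%N -> (forall i, P i -> neg_span k (g i)) ->
  neg_span k (\sum_(i <- r | P i) g i).
Proof.
case: k => // k _ Hg; elim/big_rec: _ => [|i x Pi Wx]; first exact: neg_span0.
by apply: neg_spanD => //; apply: Hg.
Qed.

Lemma neg_spanN k x : neg_span k x -> neg_span k (- x).
Proof. by move=> Wx; rewrite -scaleN1r; apply: neg_spanZ. Qed.

Lemma neg_span_brl a x : neg_span a x ->
  forall b y, neg_span b y -> neg_span (a + b) (br x y).
Proof.
elim=> {a x} [v Hv|k w z Hw Wz IH|k x1 x2 _ IH1 _ IH2|k c x _ IH|k] b y Wy.
- by rewrite add1n; apply: neg_span_br.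
- have -> : br (br w z) y
      = br w (br z y) - sgn R (-1) (- k%:Z) *: br z (br w y).
    by rewrite (br_jacobi y Hw (neg_span_homog Wz)) addrK.
  apply: neg_spanD; first by rewrite addSn; apply: neg_span_br => //; apply: IH.
  by apply/neg_spanN/neg_spanZ; rewrite addSnnS; apply/IH/neg_span_br.
- by rewrite (lmapD (br_linl y)); apply: neg_spanD; [apply: IH1|apply: IH2].
- by rewrite (lmapZ (br_linl y)); apply: neg_spanZ; apply: IH.
- by rewrite (lmap0 (br_linl y)); apply: neg_span0.
Qed.

Lemma neg_span_brr b z : neg_span b z -> forall (p : nat) g, G (p%:Z) g ->
  (p < b)%N -> neg_span (b - p) (br g z).
Proof.
elim=> {b z} [v Hv|k w z Hw Wz IH|k x1 x2 _ IH1 _ IH2|k c x _ IH|k] p g Hg Hp.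
- have -> : p = 0%N by lia.
  by apply: neg_span1; apply: (homog_cast _ (homog_br Hg Hv)); lia.
- rewrite (br_jacobi z Hg Hw); apply: neg_spanD.
  + case: p Hg Hp => [|p] Hg Hp.
      rewrite subn0 -add1n; apply: neg_span_brl Wz; apply: neg_span1.
      by apply: (homog_cast _ (homog_br Hg Hw)).
    rewrite subSS; apply: IH; last by lia.
    by apply: (homog_cast _ (homog_br Hg Hw)); lia.
  + apply: neg_spanZ; have [ltpk|lekp] := ltnP p k.
      by rewrite subSn; [apply: neg_span_br => //; apply: IH | lia].
    have pk : p = k by lia.
    rewrite pk subSnn; apply: neg_span1.
    by apply: (homog_cast _ (homog_br Hw (homog_br Hg (neg_span_homog Wz)))); lia.
- by rewrite (lmapD (br_linr g)); apply: neg_spanD; [apply: IH1|apply: IH2].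
- by rewrite (lmapZ (br_linr g)); apply: neg_spanZ; apply: IH.
- by rewrite (lmap0 (br_linr g)) subSn; [apply: neg_span0 | lia].
Qed.

(* [good] is the span of the homogeneous elements that lie in [neg_span] when
   their degree is negative; it is a subalgebra containing the generators. *)
Inductive good : V -> Prop :=
| good_homog (p : int) v : G p v -> (p < 0 -> neg_span `|p|%N v) -> good v
| goodD x y : good x -> good y -> good (x + y)
| goodZ a x : good x -> good (a *: x).

Lemma good_homog_br p q x y : G p x -> (p < 0 -> neg_span `|p|%N x) ->
  G q y -> (q < 0 -> neg_span `|q|%N y) -> good (br x y).
Proof.
move=> Gx Wx Gy Wy; apply: (good_homog (homog_br Gx Gy)) => Hpq.
case: p Gx Wx Hpq => [p|p] Gx Wx; case: q Gy Wy => [q|q] Gy Wy Hpq.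
- exfalso; lia.
- by apply: (neg_span_cast _ (neg_span_brr (Wy isT) Gx _)); lia.
- rewrite (br_supersym Gx Gy); apply/neg_spanN/neg_spanZ.
  by apply: (neg_span_cast _ (neg_span_brr (Wx isT) Gy _)); lia.
- by apply: (neg_span_cast _ (neg_span_brl (Wx isT) (Wy isT))); lia.
Qed.

Lemma good_br x y : good x -> good y -> good (br x y).
Proof.
move=> Sx; elim: Sx y => {x} [p x Gx Wx|x1 x2 _ IH1 _ IH2|a x _ IH] y Sy.
- elim: Sy => {y} [q y Gy Wy|y1 y2 _ IH1 _ IH2|a y _ IH].
  + exact: good_homog_br Gx Wx Gy Wy.
  + by rewrite (lmapD (br_linr x)); apply: goodD.
  + by rewrite (lmapZ (br_linr x)); apply: goodZ.
- by rewrite (lmapD (br_linl y)); apply: goodD; [apply: IH1|apply: IH2].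
- by rewrite (lmapZ (br_linl y)); apply: goodZ; apply: IH.
Qed.

Lemma good_decomp v : good v -> exists l : seq (int * V),
  (forall i, i \in l -> G i.1 i.2 /\ (i.1 < 0 -> neg_span `|i.1|%N i.2)) /\
  v = \sum_(i <- l) i.2.
Proof.
elim=> {v} [p v Gv Wv|x y _ [l1 [H1 ->]] _ [l2 [H2 ->]]|a x _ [l [H ->]]].
- exists [:: (p, v)]; split; last by rewrite big_seq1.
  by move=> i; rewrite inE => /eqP ->.
- exists (l1 ++ l2); split; last by rewrite big_cat.
  by move=> i; rewrite mem_cat => /orP[/H1|/H2].
- exists (map (fun i => (i.1, a *: i.2)) l); split; last first.
    by rewrite big_map scaler_sumr.
  move=> i /mapP [j /H [Gj Wj] ->] /=; split; first exact: homogZ.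
  by move=> /Wj; apply: neg_spanZ.
Qed.

Hypothesis all_good : forall v, good v.

(* Split a decomposition of y into its homogeneous parts; the direct-sum
   property identifies the degree -k part with y. *)
Lemma homog_neg_span k y : (0 < k)%N -> G (- k%:Z) y -> neg_span k y.
Proof.
move=> k0 Gy; have [l [Hl Ey]] := good_decomp (all_good y).
set s := undup (- k%:Z :: map fst l).
pose c p := \sum_(i <- l | i.1 == p) i.2 - ((p == - k%:Z)%:R : R) *: y.
have Gc p : G p (c p).
  apply: homogB.
    rewrite big_seq_cond; apply: homog_sum => i /andP[il /eqP <-].
    exact: (Hl i il).1.
  by case: eqP => [->|_]; [exact: homogZ | rewrite scale0r; apply: homog0].
have ks : - k%:Z \in s by rewrite mem_undup in_cons eqxx.
have sum_c : \sum_(p <- s) c p = 0.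
  rewrite sumrB -scaler_suml sum_uniq_indicator ?undup_uniq // scale1r.
  rewrite [X in X - _](_ : _ = \sum_(i <- l) i.2) -?Ey ?subrr //.
  under eq_bigr do rewrite big_mkcond.
  rewrite exchange_big Ey; apply: eq_big_seq => i il.
  rewrite -[RHS]scale1r -(@sum_uniq_indicator R _ s i.1) ?undup_uniq //; last first.
    by rewrite mem_undup in_cons map_f ?orbT.
  rewrite scaler_suml; apply: eq_bigr => p _.
  by rewrite [p == _]eq_sym; case: eqP; rewrite ?scale1r ?scale0r.
case: HL => [[_ _ Hdirect]] _ _ _ _.
have /eqP := Hdirect s c (undup_uniq _) Gc sum_c _ ks.
rewrite /c eqxx scale1r subr_eq0 => /eqP <-.
rewrite big_seq_cond; apply: neg_span_sum => // i /andP[il /eqP Ei].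
by apply: (neg_span_cast _ ((Hl i il).2 _)); rewrite Ei; lia.
Qed.

Hypothesis form_nondeg : forall v, (forall y, form y v = 0) -> v = 0.

Lemma homog_eq0_by_form x q : G q x ->
  (forall y, G (- q) y -> form y x = 0) -> x = 0.
Proof.
move=> Gx H; apply: form_nondeg => y.
case: HL => [[_ Hdecomp _]] _ _ _ _; have [s [c [Gc ->]]] := Hdecomp y.
rewrite (lform_sum (form_linl x)) big1 // => p _.
have [->|np] := eqVneq p (- q); first exact: H.
apply: (form_homog0 (Gc p) Gx); apply: contra np => /eqP Hpq.
by apply/eqP; rewrite -[p]addr0 -(subrr q) addrA Hpq add0r.
Qed.

Variables (d : nat) (E F : 'I_d -> V).
Hypotheses (HE : is_basis_of (G (-1)) E) (HF : is_basis_of (G 1) F)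
  (HEF : forall M N, form (E M) (F N) = (M == N)%:R).

Lemma E_homog M : G (-1) (E M). Proof. by case: HE. Qed.
Lemma F_homog M : G 1 (F M). Proof. by case: HF. Qed.

Lemma tuple_neq_nil (T : eqType) k (K : k.+1.-tuple T) : tval K != [::].
Proof. by case: K => [[|? ?]]. Qed.

Lemma itbrE_homog k (K : k.+1.-tuple 'I_d) : G (- k.+1%:Z) (itbr br E K).
Proof.
rewrite itbrE; apply: (homog_cast _ (bracket_chain_homog (c := -1) _ _)).
- by rewrite size_map size_tuple mulN1r.
- by case: K => [[|? ?]].
- by move=> v /mapP [M _ ->]; apply: E_homog.
Qed.

Lemma itbrF_homog k (K : k.+1.-tuple 'I_d) : G (k.+1%:Z) (itbr br F K).
Proof.
rewrite itbrE; apply: (homog_cast _ (bracket_chain_homog (c := 1) _ _)).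
- by rewrite size_map size_tuple mul1r.
- by case: K => [[|? ?]].
- by move=> v /mapP [M _ ->]; apply: F_homog.
Qed.

Lemma form_neg_span0 k y : neg_span k y -> forall x, G (k%:Z) x ->
  (forall K : k.-tuple 'I_d, form (itbr br E K) x = 0) -> form y x = 0.
Proof.
elim=> {k y} [v Hv|k w z Hw Wz IH|k x1 x2 _ IH1 _ IH2|k c x1 _ IH|k] x Gx HK.
- case: HE => _ Hspan _; have [c ->] := Hspan v Hv.
  rewrite (lform_sum (form_linl x)) big1 // => M _.
  by rewrite (lformZ (form_linl x)) (HK [tuple M]) mulr0.
- case: k Wz IH Gx HK => [|k] Wz IH Gx HK; first by have := neg_span_gt0 Wz.
  rewrite (br_supersym Hw (neg_span_homog Wz)) (lformN (form_linl x)).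
  rewrite (lformZ (form_linl x)) form_invariant (IH (br w x)) ?mulr0 ?oppr0 //.
    by apply: (homog_cast _ (homog_br Hw Gx)); lia.
  move=> K; rewrite -form_invariant (br_supersym (itbrE_homog K) Hw).
  rewrite (lformN (form_linl x)) (lformZ (form_linl x)).
  case: HE => _ Hspan _; have [c ->] := Hspan w Hw.
  rewrite (lmap_sum (br_linl _)) (lform_sum (form_linl x)) big1 ?mulr0 ?oppr0 //.
  move=> M _; rewrite (lmapZ (br_linl _)) (lformZ (form_linl x)).
  by rewrite -itbr_cons ?tuple_neq_nil // (HK (cons_tuple M K)) mulr0.
- by rewrite (lformD (form_linl x)) IH1 ?IH2 ?addr0.
- by rewrite (lformZ (form_linl x)) IH ?mulr0.
- by rewrite (lform0 (form_linl x)).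
Qed.

Lemma eq0_by_itbrE k x : G (k.+1%:Z) x ->
  (forall K : k.+1.-tuple 'I_d, form (itbr br E K) x = 0) -> x = 0.
Proof.
move=> Gx HK; apply: (homog_eq0_by_form Gx) => y Gy.
exact: form_neg_span0 (homog_neg_span _ Gy) x Gx HK.
Qed.

Lemma expand_deg1 x : G 1 x -> x = \sum_L form (E L) x *: F L.
Proof.
case: HF => _ Hspan _ /Hspan [c ->]; apply: eq_bigr => L _; congr (_ *: _).
rewrite (lform_sum (form_linr _)).
by under eq_bigr do rewrite (lformZ (form_linr _)) HEF; rewrite sum_mul_delta.
Qed.

Lemma eq0_by_E x : G 1 x -> (forall L, form (E L) x = 0) -> x = 0.
Proof.
by move=> Gx H; rewrite (expand_deg1 Gx) big1 // => L _; rewrite H scale0r.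
Qed.

Lemma form_itbr1 (K M : 1.-tuple 'I_d) :
  form (itbr br E K) (itbr br F M) = (K == M)%:R.
Proof.
case: K => [[|k0 [|? ?]] //= HK]; case: M => [[|m0 [|? ?]] //= HM].
have -> : (@Tuple 1 _ [:: k0] HK == @Tuple 1 _ [:: m0] HM) = (k0 == m0).
  by rewrite -val_eqE /= eqseq_cons andbT.
by rewrite HEF.
Qed.

Variables (P : forall k : nat, k.-tuple 'I_d -> k.-tuple 'I_d -> R)
  (q : nat) (a : nat -> R).
Arguments P : clear implicits.
Hypotheses (HP : forall k : nat, (2 <= k)%N -> is_projector br E F (P k))
  (a1 : a 1%N = 1)
  (Ha : forall k : nat, (2 <= k <= q.+2)%N ->
        forall M N : k.-tuple 'I_d,
          form (itbr br E M) (itbr br F N) = a k * P k M N).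

Lemma br_shorter_itbr (M' : q.+1.-tuple 'I_d) (N : q.+2.-tuple 'I_d) :
  br (itbr br E M') (itbr br F N)
  = a q.+2 *: \sum_(M1 : 'I_d) P q.+2 (cons_tuple M1 M') N *: F M1.
Proof.
apply/eqP; rewrite -subr_eq0; apply/eqP; apply: eq0_by_E.
  apply: homogB; first by apply: (homog_cast _ (homog_br (itbrE_homog M') (itbrF_homog N))); lia.
  by apply/homogZ/homog_sum => M1 _; apply/homogZ/F_homog.
move=> L; rewrite (lformB (form_linr _)) -form_invariant -itbr_cons ?tuple_neq_nil //.
rewrite -[L :: _]/(tval (cons_tuple L M')) Ha; last by lia.
rewrite (lformZ (form_linr _)) (lform_sum (form_linr _)).
by under eq_bigr do rewrite (lformZ (form_linr _)) HEF; rewrite sum_mul_delta subrr.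
Qed.

(* For k = 0 this is the basis expansion; otherwise it is the projector identity
   with the normalisation a_{k+1} of the pairing. *)
Lemma itbrE_expand k (K : k.+1.-tuple 'I_d) : (k.+1 <= q.+2)%N -> a k.+1 != 0 ->
  itbr br E K = \sum_(M' : k.+1.-tuple 'I_d)
     (form (itbr br E K) (itbr br F M') / a k.+1) *: itbr br E M'.
Proof.
case: k K => [|k] K Hk ak_neq0.
  by under eq_bigr do rewrite form_itbr1 a1 divr1; rewrite sum_scale_delta.
have [_ HPE _] := HP (k:=k.+2) isT; rewrite [in LHS]HPE; apply: eq_bigr => M' _.
by rewrite Ha // mulrAC mulfV // mul1r.
Qed.

(* If a_{q+1} = 0 the right side of (i) is 0 (division by 0 gives 0), and so is
   the left side: F^{N_2...N_p} pairs to zero with all of U_{-(q+1)}. *)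
Lemma br_E_itbr_degenerate (M : 'I_d) (N : q.+2.-tuple 'I_d) :
  a q.+1 = 0 -> br (E M) (itbr br F N) = 0.
Proof.
move=> a0; have q_gt0 : (0 < q)%N.
  by case: (posnP q) a0 => [->|//]; rewrite a1 => /eqP; rewrite oner_eq0.
case: N => [[|N1 N'] sizeN] //; have sizeN' : size N' == q.+1 by [].
have F0 : itbr br F (Tuple sizeN') = 0.
  apply: (eq0_by_itbrE (itbrF_homog _)) => K.
  by rewrite Ha ?a0 ?mul0r //; lia.
rewrite -[tval _]/(N1 :: tval (Tuple sizeN')) itbr_cons ?tuple_neq_nil //.
by rewrite F0 (lmap0 (br_linr _)) (lmap0 (br_linr _)).
Qed.

Lemma br_E_itbr (M : 'I_d) (N : q.+2.-tuple 'I_d) :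
  br (E M) (itbr br F N)
  = ((-1) ^+ q.+2 * (a q.+2 / a q.+1)) *:
    \sum_(M' : q.+1.-tuple 'I_d) P q.+2 (cons_tuple M M') N *: itbr br F M'.
Proof.
have [a0|a_neq0] := eqVneq (a q.+1) 0.
  by rewrite br_E_itbr_degenerate // a0 invr0 !mulr0 scale0r.
apply/eqP; rewrite -subr_eq0; apply/eqP; apply: (eq0_by_itbrE (k:=q)).
  apply: homogB; first by apply: (homog_cast _ (homog_br (E_homog M) (itbrF_homog N))); lia.
  by apply/homogZ/homog_sum => M' _; apply/homogZ/itbrF_homog.
move=> K; rewrite (lformB (form_linr _)) -form_invariant.
rewrite (br_supersym (itbrE_homog K) (E_homog M)) (lformN (form_linl _)).
rewrite (lformZ (form_linl _)) -itbr_cons ?tuple_neq_nil //.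
rewrite -[M :: _]/(tval (cons_tuple M K)) Ha; last by lia.
rewrite (lformZ (form_linr _)) (lform_sum (form_linr _)).
under eq_bigr do rewrite (lformZ (form_linr _)).
set S := \sum_(M' : q.+1.-tuple 'I_d) _.
have pairing : a q.+2 * P q.+2 (cons_tuple M K) N = a q.+2 / a q.+1 * S.
  rewrite -Ha; last by lia.
  rewrite [tval _]/= itbr_cons ?tuple_neq_nil // {1}(itbrE_expand K _ a_neq0) //.
  rewrite (lmap_sum (br_linr _)) (lform_sum (form_linl _)) /S mulr_sumr.
  apply: eq_bigr => M' _.
  rewrite (lmapZ (br_linr _)) (lformZ (form_linl _)) -itbr_cons ?tuple_neq_nil //.
  rewrite -[M :: _]/(tval (cons_tuple M M')) (Ha _ (cons_tuple M M') N).
    by ring.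
  by lia.
by rewrite pairing -mulNr sgnN1 mulrA subrr.
Qed.
Lemma form_deg0_br_itbr u (M N : q.+2.-tuple 'I_d) : G 0 u ->
  form u (br (itbr br E M) (itbr br F N))
  = a q.+2 * \sum_(i < q.+2) \sum_L
      P q.+2 M (tuple_upd N i L) * form (br u (E L)) (F (tnth N i)).
Proof.
move=> Gu; rewrite -form_invariant (br_supersym Gu (itbrE_homog M)) sgn0l scale1r.
rewrite (lformN (form_linl _)) form_invariant [itbr br F N]itbrE.
rewrite (br_bracket_chain Gu); last by move=> v /mapP [n _ ->]; apply: F_homog.
rewrite size_map size_tuple big_mkord (lform_sum (form_linr _)) -sumrN mulr_sumr.
apply: eq_bigr => i _.
have Ni : nth 0 (map F N) i = F (tnth N i).
  by rewrite (nth_map (tnth N i)) ?size_tuple // -tnth_nth.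
have lt_i : (i < size (map F N))%N by rewrite size_map size_tuple.
have G1 : G 1 (br u (F (tnth N i))) by apply: (homog_cast _ (homog_br Gu (F_homog _))).
rewrite Ni [br u (F (tnth N i))](expand_deg1 G1).
rewrite (lmap_sum (bracket_chain_set_lmap lt_i)) (lform_sum (form_linr _)).
rewrite -sumrN mulr_sumr; apply: eq_bigr => L _.
rewrite (lmapZ (bracket_chain_set_lmap lt_i)) (lformZ (form_linr _)).
rewrite -(map_tuple_upd _ 0) -itbrE Ha; last by lia.
rewrite -form_invariant (br_supersym (E_homog L) Gu) sgn0r scale1r.
by rewrite (lformN (form_linl _)); ring.
Qed.

Lemma form_deg0_sum_agree u (M N : q.+2.-tuple 'I_d) : G 0 u ->
  form u (a q.+2 *: \sum_(K : q.+2.-tuple 'I_d) P q.+2 M K *: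
      \sum_(i < q.+2)
        (\prod_(j < q.+2 | j != i) (tnth K j == tnth N j)%:R) *:
          br (E (tnth K i)) (F (tnth N i)))
  = a q.+2 * \sum_(i < q.+2) \sum_L
      P q.+2 M (tuple_upd N i L) * form (br u (E L)) (F (tnth N i)).
Proof.
move=> Gu; rewrite (lformZ (form_linr _)) (lform_sum (form_linr _)); congr (_ * _).
under eq_bigr do rewrite (lformZ (form_linr _)) (lform_sum (form_linr _)) mulr_sumr.
rewrite exchange_big; apply: eq_bigr => i _ /=.
transitivity (\sum_(K : q.+2.-tuple 'I_d)
    (\prod_(j < q.+2 | j != i) ((tnth K j == tnth N j)%:R : R)) *
      (P q.+2 M K * form (br u (E (tnth K i))) (F (tnth N i)))).
  by apply: eq_bigr => K _; rewrite (lformZ (form_linr _)) -form_invariant; ring.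
by rewrite sum_agree_except; apply: eq_bigr => L _; rewrite tnth_mktuple eqxx.
Qed.

Lemma br_itbr_itbr (M N : q.+2.-tuple 'I_d) :
  br (itbr br E M) (itbr br F N)
  = a q.+2 *: \sum_(K : q.+2.-tuple 'I_d) P q.+2 M K *:
      \sum_(i < q.+2)
        (\prod_(j < q.+2 | j != i) (tnth K j == tnth N j)%:R) *:
          br (E (tnth K i)) (F (tnth N i)).
Proof.
apply/eqP; rewrite -subr_eq0; apply/eqP; apply: (homog_eq0_by_form (q:=0)).
  apply: homogB.
    by apply: (homog_cast _ (homog_br (itbrE_homog M) (itbrF_homog N))); lia.
  apply/homogZ/homog_sum => K _; apply/homogZ/homog_sum => i _; apply: homogZ.
  by apply: (homog_cast _ (homog_br (E_homog _) (F_homog _))).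
move=> u; rewrite oppr0 => Gu.
by rewrite (lformB (form_linr _)) form_deg0_br_itbr // form_deg0_sum_agree // subrr.
Qed.
End GradedSuperalgebra.

Lemma is_U_all_good (R : fieldType) (V : lmodType R) n (G : int -> V -> Prop)
    (br : V -> V -> V) (e f h : 'I_n.+1 -> V) :
  is_U G br e f h -> forall v, good G br v.
Proof.
case=> HL [e0_homog f0_homog ef_homog h_homog] _ [generated _] _.
have good_nonneg (p : nat) v : G (Posz p) v -> good G br v.
  by move=> Gv; apply: (good_homog Gv).
apply: generated => [|I|x y]; last exact: good_br.
- split; first exact: (good_nonneg 0%N _ (homog0 HL 0)).
  by move=> c x y gx gy; apply/goodD/gy/goodZ.
- have [I0|I_neq0] := eqVneq (val I) 0%N; last first.
    by have [eI fI] := ef_homog I I_neq0; split; apply: (good_nonneg 0%N).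
  have -> : I = ord0 by apply: val_inj.
  split; [|exact: (good_nonneg 1%N) | exact: (good_nonneg 0%N)].
  by apply: (good_homog e0_homog) => _; apply: neg_span1.
Qed.

Lemma is_U_form_nondeg (R : realFieldType) (V : lmodType R) n
    (G : int -> V -> Prop) (br : V -> V -> V) (e f h : 'I_n.+1 -> V)
    (form : V -> V -> R) :
  (4 <= n <= 8)%N -> is_U G br e f h -> is_U_form G br e f h form ->
  forall v, (forall y, form y v = 0) -> v = 0.
Proof.
move=> n48 [HL _ _ _ maximal] [Hinv form_h _ _ _].
apply: (maximal (fun v => forall y, form y v = 0)).
  split; first split.
  - by move=> y; rewrite (lform0 (form_linr Hinv y)).
  - by move=> c x z Hx Hz y; rewrite (form_linr Hinv y) Hx Hz mulr0 add0r.
  - by move=> x z Hz y; rewrite -(form_invariant Hinv); apply: Hz.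
move=> w w_rad [c Ew]; suff c0 I : c I = 0.
  by rewrite Ew big1 // => I _; rewrite c0 scale0r.
apply: (cartanA_nondeg n48) => J.
rewrite -[RHS](w_rad (h J)) Ew (lform_sum (form_linr Hinv _)).
by apply: eq_bigr => K _; rewrite (lformZ (form_linr Hinv _)) form_h cartanA_sym.
Qed.

Unset Implicit Arguments.
Set Strict Implicit.

Theorem theorem1 (R : realType) (n : nat) (Hn : (4 <= n <= 8)%N)
  (V : lmodType R) (G : int -> V -> Prop) (br : V -> V -> V)
  (e f h : 'I_n.+1 -> V) (form : V -> V -> R)
  (HU : is_U G br e f h) (Hform : is_U_form G br e f h form)
  (d : nat) (E F : 'I_d -> V)
  (HE : is_basis_of (G (-1)) E) (HF : is_basis_of (G 1) F)
  (HEF : forall M N, form (E M) (F N) = (M == N)%:R)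
  (P : forall k : nat, k.-tuple 'I_d -> k.-tuple 'I_d -> R)
  (HP : forall k : nat, (2 <= k)%N -> is_projector br E F (P k))
  (q : nat) (a : nat -> R) (Ha1 : a 1%N = 1)
  (Ha : forall k : nat, (2 <= k <= q.+2)%N ->
        forall M N : k.-tuple 'I_d,
          form (itbr br E M) (itbr br F N) = a k * P k M N) :
  [/\ (* (i) *)
      forall (M : 'I_d) (N : q.+2.-tuple 'I_d),
        br (E M) (itbr br F N)
        = ((-1) ^+ q.+2 * (a q.+2 / a q.+1)) *:
          \sum_(M' : q.+1.-tuple 'I_d) P q.+2 (cons_tuple M M') N *: itbr br F M',
      (* (ii) *)
      forall (M' : q.+1.-tuple 'I_d) (N : q.+2.-tuple 'I_d),
        br (itbr br E M') (itbr br F N)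
        = a q.+2 *: \sum_(M1 : 'I_d) P q.+2 (cons_tuple M1 M') N *: F M1
    & (* (iii) *)
      forall (M N : q.+2.-tuple 'I_d),
        br (itbr br E M) (itbr br F N)
        = a q.+2 *: \sum_(K : q.+2.-tuple 'I_d) P q.+2 M K *:
            \sum_(i < q.+2)
              (\prod_(j < q.+2 | j != i) (tnth K j == tnth N j)%:R) *:
                br (E (tnth K i)) (F (tnth N i))].
Proof.
have HL : graded_lie_superalgebra G br by case: HU.
have Hinv : invariant_form G br form by case: Hform.
have all_good := is_U_all_good HU.
have nondeg := is_U_form_nondeg Hn HU Hform.
split.
- exact: (br_E_itbr HL Hinv all_good nondeg HE HF HEF HP Ha1 Ha).
- exact: (br_shorter_itbr HL Hinv HE HF HEF Ha).
- exact: (br_itbr_itbr HL Hinv nondeg HE HF HEF Ha).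
Qed.
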